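(* Let $K$ be a number field, $\gamma\in\mathcal O_K$ a primitive element with monic minimal polynomial $f\in\mathbb Z[x]$, and let $I = a\mathcal O_K + \alpha\mathcal O_K$ with $a$ a positive integer and $\alpha\in\mathcal O_K$. Assume $\gcd(a, [\mathcal O_K:\mathbb Z[\gamma]]) = 1$. Let $g\in\mathbb Q[x]$ satisfy $g(\gamma) = \alpha$ and have coefficients whose denominators are coprime to $a$, and let $\bar g,\bar f$ be the images in $(\mathbb Z/a\mathbb Z)[x]$. Then $\min(I)$ is the unique positive divisor $m$ of $a$ such that $\mathrm{Rres}_{\mathbb Z/a\mathbb Z}(\bar g, \bar f)$ is the ideal generated by $m \bmod a$ in $\mathbb Z/a\mathbb Z$.
   Context: $\mathcal O_K$ is the ring of integers of $K$. The minimum $\min(I)$ is the positive integer with $I\cap\mathbb Z = \min(I)\mathbb Z$. For a commutative ring $S$ and $p,q \in S[x]$, $\mathrm{Rres}_S(p,q) = (p,q)\cap S$, where $(p,q)$ is the ideal of $S[x]$ generated by $p,q$. *)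

From HB Require Import structures.
From mathcomp Require Import all_boot all_order all_algebra all_field.
Set Implicit Arguments. Unset Strict Implicit. Unset Printing Implicit Defensive.
Import Order.TTheory GRing.Theory Num.Theory.
Local Open Scope ring_scope.

(* A number field is modelled as K : fieldExtType rat (finite-dimensional
   extension of Q). *)

Definition integral (K : fieldExtType rat) (x : K) : Prop :=
  exists p : {poly int}, p \is monic /\ root (map_poly intr p) x.

Definition inZgamma (K : fieldExtType rat) (gamma x : K) : Prop :=
  exists p : {poly int}, x = (map_poly intr p).[gamma].

(* [O_K : Z[gamma]] = d  (cardinality of the quotient group O_K / Z[gamma]):
   there are d elements of O_K, pairwise incongruent mod Z[gamma], that
   represent every class of O_K mod Z[gamma]. *)
Definition is_index (K : fieldExtType rat) (gamma : K) (d : nat) : Prop :=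
  exists s : seq K,
    [/\ size s = d,
        forall i, (i < d)%N -> integral (nth 0 s i),
        forall i j, (i < d)%N -> (j < d)%N ->
          inZgamma gamma (nth 0 s i - nth 0 s j) -> i = j
      & forall x, integral x ->
          exists2 i, (i < d)%N & inZgamma gamma (x - nth 0 s i)].

Definition inI (K : fieldExtType rat) (a : nat) (alpha x : K) : Prop :=
  exists y z, [/\ integral y, integral z & x = a%:R * y + alpha * z].

Definition is_min (K : fieldExtType rat) (a : nat) (alpha : K) (m : nat) : Prop :=
  (0 < m)%N /\ forall z : int, inI a alpha (z%:~R) <-> (m%:Z %| z)%Z.

(* Z/aZ is represented by integers modulo a.
   r : int represents the image in Z/aZ of q : rat (with denominator
   coprime to a): r * denq q = numq q  in Z/aZ. *)
Definition red_rat (a : nat) (q : rat) (r : int) : Prop :=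
  (r * denq q == numq q %[mod a%:Z])%Z.

(* G : {poly int} is a lift of the image gbar in (Z/aZ)[x] of g : {poly rat}. *)
Definition red_poly (a : nat) (g : {poly rat}) (G : {poly int}) : Prop :=
  forall i, red_rat a g`_i G`_i.

(* c mod a lies in Rres_{Z/aZ}(Gbar, Fbar) = (Gbar, Fbar) cap Z/aZ. *)
Definition in_Rres_mod (a : nat) (G F : {poly int}) (c : int) : Prop :=
  exists u v : {poly int},
    forall i, ((u * G + v * F)`_i == (c%:P)`_i %[mod a%:Z])%Z.

Definition Rres_is_ideal (a : nat) (G F : {poly int}) (m : nat) : Prop :=
  forall c : int, in_Rres_mod a G F c <->
    exists k : int, (c == k * m%:Z %[mod a%:Z])%Z.

From HB Require Import structures.
From mathcomp Require Import all_boot all_order all_algebra all_field.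
From mathcomp Require Import ring zify.
From Stdlib Require Import ClassicalEpsilon.
Import Order.TTheory GRing.Theory Num.Theory.
Local Open Scope ring_scope.

(* Write ev P = P(gamma) for P in Z[x], and clear the
   denominators of g: with D the product of the denominators of the
   coefficients of g (a unit mod a), h := D*g lies in Z[x] and
   h = D*G mod a.  For an integer c we show
       c in I   <->   c mod a in Rres(G, f) mod a.
   (<-) From u*G + v*f = c mod a, evaluating D*(u*G + v*f) at gamma
        (f(gamma) = 0, h(gamma) = D*alpha) puts D*c in I; D is
        invertible mod a and a is in I, so c is in I.
   (->) From c = a*y + alpha*z, multiply by the index d: d*y, d*z lie
        in Z[gamma], so D*d*c - a*D*Y - h*Z vanishes at gamma and hence
        is a multiple of the minimal polynomial f; D*d is invertible
        mod a and h = D*G mod a, giving c in Rres mod a.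
   Hence I cap Z and Rres mod a are both "the multiples of m" for the
   least positive integer m of I (which exists by well-ordering); m
   divides a since a is in I, and a divisor m of a generating Rres mod a
   is unique, since two such divisors divide each other. *)

Section Integers.
Context {K : fieldExtType rat} (gamma : K).
Implicit Types x y z : K.

Lemma integralE x : integral x <-> integralOver (intr : int -> K) x.
Proof. by split=> [[p [mp rp]]|[p mp rp]]; exists p. Qed.

Lemma integral_int (c : int) : integral (c%:~R : K).
Proof. by apply/integralE; apply: integral_id. Qed.

Lemma integralD {x y} : integral x -> integral y -> integral (x + y).
Proof. by move=> /integralE ? /integralE ?; apply/integralE; apply: integral_add. Qed.

Lemma integralM {x y} : integral x -> integral y -> integral (x * y).
Proof. by move=> /integralE ? /integralE ?; apply/integralE; apply: integral_mul. Qed.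

Lemma integralN {x} : integral x -> integral (- x).
Proof. by move=> /integralE ?; apply/integralE; apply: integral_opp. Qed.

Definition ev (p : {poly int}) : K := (map_poly intr p).[gamma].

Lemma evD p q : ev (p + q) = ev p + ev q.
Proof. by rewrite /ev rmorphD hornerD. Qed.

Lemma evB p q : ev (p - q) = ev p - ev q.
Proof. by rewrite /ev rmorphB hornerD hornerN. Qed.

Lemma evM p q : ev (p * q) = ev p * ev q.
Proof. by rewrite /ev rmorphM hornerM. Qed.

Lemma evC c : ev c%:P = c%:~R.
Proof. by rewrite /ev map_polyC hornerC. Qed.

Lemma ev_integral p : integral gamma -> integral (ev p).
Proof.
move=> /integralE hg; apply/integralE; apply: integral_horner => //.
by apply/integral_poly => i; rewrite coef_map; apply: integral_id.
Qed.

Lemma inZgamma0 : inZgamma gamma 0.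
Proof. by exists 0; rewrite rmorph0 horner0. Qed.

Lemma inZgammaD {x y} : inZgamma gamma x -> inZgamma gamma y -> inZgamma gamma (x + y).
Proof. by move=> [p ->] [q ->]; exists (p + q); rewrite rmorphD hornerD. Qed.

Lemma inZgammaB {x y} : inZgamma gamma x -> inZgamma gamma y -> inZgamma gamma (x - y).
Proof. by move=> [p ->] [q ->]; exists (p - q); rewrite rmorphB hornerD hornerN. Qed.

(* The index annihilates O_K / Z[gamma]: d * z lies in Z[gamma] for z in
   O_K.  Translation by z permutes the d classes, so summing the
   differences s_i + z - s_(phi i) gives d * z. *)
Lemma index_mul_integral d z :
  is_index gamma d -> integral z -> exists Z, d%:R * z = ev Z.
Proof.
case=> s [_ s_int s_inj s_cover] zi.
have shift (i : 'I_d) :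
    exists j : 'I_d, inZgamma gamma (nth 0 s i + z - nth 0 s j).
  have [j jd hj] := s_cover _ (integralD (s_int _ (ltn_ord i)) zi).
  by exists (Ordinal jd).
pose phi i := proj1_sig (constructive_indefinite_description _ (shift i)).
have phiP (i : 'I_d) : inZgamma gamma (nth 0 s i + z - nth 0 s (phi i)).
  exact: proj2_sig (constructive_indefinite_description _ (shift i)).
have phi_inj : injective phi.
  move=> i k e; apply/val_inj/(s_inj _ _ (ltn_ord i) (ltn_ord k)).
  by have := inZgammaB (phiP i) (phiP k); rewrite e; congr (inZgamma _ _); ring.
have : inZgamma gamma (\sum_(i < d) (nth 0 s i + z - nth 0 s (phi i))).
  by apply: big_ind => //; [exact: inZgamma0 | move=> ? ?; exact: inZgammaD].
have -> : \sum_(i < d) (nth 0 s i + z - nth 0 s (phi i)) = d%:R * z.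
  rewrite sumrB big_split /= sumr_const card_ord.
  rewrite [X in X + _ - _](reindex_inj phi_inj) /=.
  by rewrite addrAC subrr add0r mulr_natl.
by case=> p ->; exists p.
Qed.

Lemma intr_inj : injective (intr : int -> K).
Proof.
move=> x y e; apply/eqP; rewrite -subr_eq0.
have : ((x - y)%:~R : K) == 0 by rewrite rmorphB /= e subrr.
by rewrite -(rmorph_int (in_alg K)) fmorph_eq0 intr_eq0.
Qed.

Lemma size_map_intr (p : {poly int}) : size (map_poly (intr : int -> K) p) = size p.
Proof. by apply: size_map_inj_poly; [exact: intr_inj | exact: rmorph0]. Qed.

(* An integer polynomial vanishing at gamma is an integer multiple of the
   monic minimal polynomial f: the remainder of the division by f is too
   small to be divisible by the minimal polynomial, hence is zero. *)
Lemma minPoly_int_dvd (f P : {poly int}) : f \is monic ->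
  map_poly intr f = minPoly 1%VS gamma -> ev P = 0 -> exists Q, P = Q * f.
Proof.
move=> mf hf eP.
have := Pdiv.Idomain.divp_eq P f; rewrite (monicP mf) expr1n scale1r => P_eq.
exists (Pdiv.Idomain.divp P f).
suff r0 : Pdiv.Idomain.modp P f = 0 by rewrite {1}P_eq r0 addr0.
set r := Pdiv.Idomain.modp P f in P_eq *.
have ef : ev f = 0 by rewrite /ev hf; apply/eqP; exact: root_minPoly.
have er : ev r = 0 by move: eP; rewrite P_eq evD evM ef mulr0 add0r.
have /eqP r0 : map_poly (intr : int -> K) r == 0.
  apply: contraT => nz.
  have dv : minPoly 1%VS gamma %| map_poly intr r.
    apply: minPoly_dvdp; last by apply/eqP.
    apply/polyOver1P; exists (map_poly intr r); rewrite -map_poly_comp.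
    by apply: eq_map_poly => c /=; rewrite -in_algE rmorph_int.
  have := dvdp_leq nz dv; rewrite -hf !size_map_intr.
  have := Pdiv.Idomain.ltn_modpN0 P (monic_neq0 mf).
  by rewrite -/r; case: (size r) => [|n]; case: (size f) => [|m] //=; lia.
apply/polyP => i; apply: intr_inj.
by rewrite coef0 rmorph0 -coef_map r0 coef0.
Qed.

End Integers.
Arguments index_mul_integral {K gamma d z}.
Arguments minPoly_int_dvd {K gamma f P}.

Lemma intr_nat (K : fieldExtType rat) (n : nat) : ((n%:Z)%:~R : K) = n%:R.
Proof. by rewrite -pmulrn. Qed.

Lemma coef_dvdz_polyC (c : int) (R : {poly int}) :
  (forall i, (c %| R`_i)%Z) <-> exists W, R = c%:P * W.
Proof.
split=> [h | [W -> i]]; last by rewrite coefCM dvdz_mulr.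
exists (\poly_(i < size R) (R`_i %/ c)%Z); apply/polyP => i.
rewrite coefCM coef_poly; case: ltnP => hi; first by rewrite mulrC divzK.
by rewrite mulr0 nth_default.
Qed.

Section ClearDenominators.
Variable g : {poly rat}.

Definition den : int := \prod_(j < size g) denq g`_j.

Definition den_except (i : nat) : int :=
  \prod_(j < size g | (j : nat) != i) denq g`_j.

Definition cleared : {poly int} :=
  \poly_(i < size g) (numq g`_i * den_except i).

Lemma den_split i : den = denq g`_i * den_except i.
Proof.
rewrite /den /den_except; case: (ltnP i (size g)) => hi.
  by rewrite (bigD1 (Ordinal hi)).
rewrite nth_default // mul1r; apply: eq_bigl => j.
by apply/esym/negP => /eqP e; move: (ltn_ord j); rewrite e ltnNge hi.
Qed.

Lemma coef_cleared i : cleared`_i = numq g`_i * den_except i.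
Proof.
by rewrite coef_poly; case: ltnP => // hi; rewrite (nth_default _ hi) mul0r.
Qed.

Lemma clearedE i : (cleared`_i)%:~R = den%:~R * g`_i :> rat.
Proof. by rewrite coef_cleared rmorphM /= numqE (den_split i) rmorphM /=; ring. Qed.

Lemma coprime_den (b : int) :
  (forall i, coprimez (denq g`_i) b) -> coprimez den b.
Proof.
move=> h; apply: (big_ind (fun x => coprimez x b)) => //.
  by rewrite coprimezE /= coprime1n.
by move=> x y hx hy; rewrite coprimezMl hx hy.
Qed.

Lemma cleared_red (a : nat) (G : {poly int}) : red_poly a g G ->
  exists T, cleared = den%:P * G - (a%:Z)%:P * T.
Proof.
move=> hr; have [W hW] : exists W, den%:P * G - cleared = (a%:Z)%:P * W.
  apply/coef_dvdz_polyC => i; rewrite coefB coefCM coef_cleared (den_split i).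
  have := hr i; rewrite /red_rat eqz_mod_dvd => /(dvdz_mulr (den_except i)).
  by congr (_ %| _)%Z; ring.
by exists W; rewrite -hW; ring.
Qed.

Lemma ev_cleared (K : fieldExtType rat) (gamma : K) :
  ev gamma cleared = den%:~R * (map_poly (in_alg K) g).[gamma].
Proof.
rewrite /ev -hornerCM; congr (_.[_]); apply/polyP => i.
rewrite coefCM !coef_map /= -in_algE -(rmorph_int (in_alg K) cleared`_i).
by rewrite -(rmorph_int (in_alg K) den) -rmorphM clearedE.
Qed.

End ClearDenominators.
Arguments coprime_den {g b}.
Arguments cleared_red {g a G}.

Section IdealI.
Variables (K : fieldExtType rat) (a : nat) (alpha : K).

Lemma inI_sub x1 x2 : inI a alpha x1 -> inI a alpha x2 -> inI a alpha (x1 - x2).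
Proof.
move=> [y1 [z1 [i1 j1 ->]]] [y2 [z2 [i2 j2 ->]]].
exists (y1 - y2), (z1 - z2).
by split; [apply: integralD => //; apply: integralN ..|ring].
Qed.

Lemma inI_mul (k : int) x : inI a alpha x -> inI a alpha (k%:~R * x).
Proof.
move=> [y [z [i j ->]]]; exists (k%:~R * y), (k%:~R * z).
by split; [apply: integralM => //; apply: integral_int ..|ring].
Qed.

Lemma inI_a : inI a alpha (a%:Z)%:~R.
Proof.
exists 1, 0; split; [exact: (integral_int 1) | exact: (integral_int 0) |].
by rewrite intr_nat mulr1 mulr0 addr0.
Qed.

(* A boolean reflection of an arbitrary proposition, to apply the
   well-ordering of nat to the (undecidable) predicate "n lies in I". *)
Definition asbool (P : Prop) : bool :=
  if excluded_middle_informative P then true else false.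

Lemma asboolP (P : Prop) : reflect P (asbool P).
Proof. by rewrite /asbool; case: excluded_middle_informative; constructor. Qed.

(* min(I) exists: the least positive integer of I generates I cap Z, since
   the remainder of the division of any z in I by it is again in I. *)
Lemma min_exists : (0 < a)%N -> exists m, is_min a alpha m.
Proof.
move=> apos.
have ex : exists n, (0 < n)%N && asbool (inI a alpha (n%:Z)%:~R).
  by exists a; rewrite apos; apply/asboolP; exact: inI_a.
case: (ex_minnP ex) => m /andP [mpos /asboolP Im] minm.
exists m; split => // z; split => [Iz | /dvdz_mod0P hz]; last first.
  by rewrite (divz_eq z m%:Z) hz addr0 rmorphM /=; apply: inI_mul.
apply/dvdz_mod0P.
have m_pos : 0 < m%:Z by rewrite ltz_nat.
have r_ge0 := modz_ge0 z (lt0r_neq0 m_pos).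
have r_lt := ltz_pmod z m_pos.
have Ir : inI a alpha (((z %% m)%Z)%:~R : K).
  have -> : (z %% m)%Z = z - (z %/ m)%Z * m%:Z by rewrite {2}(divz_eq z m%:Z); ring.
  by rewrite rmorphB rmorphM /=; apply: inI_sub => //; apply: inI_mul.
move: r_ge0 r_lt Ir; case: (z %% m)%Z => n //= _ r_lt In.
case: n r_lt In => // n r_lt In.
have := minm n.+1; rewrite /= (introT (asboolP _) In) => /(_ isT).
by rewrite leqNgt -ltz_nat r_lt.
Qed.

End IdealI.

Section IntersectionWithZ.
Variables (K : fieldExtType rat) (gamma : K) (f : {poly int}) (a : nat).
Variables (alpha : K) (g : {poly rat}) (G : {poly int}).
Hypothesis gamma_int : integral gamma.
Hypothesis f_monic : f \is monic.
Hypothesis f_minPoly : map_poly intr f = minPoly 1%VS gamma.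
Hypothesis g_alpha : (map_poly (in_alg K) g).[gamma] = alpha.
Hypothesis den_coprime : forall i, coprimez (denq g`_i) a%:Z.
Hypothesis G_red : red_poly a g G.

Lemma ev_f : ev gamma f = 0.
Proof. by rewrite /ev f_minPoly; apply/eqP; exact: root_minPoly. Qed.

Lemma Rres_sub_I (c : int) : in_Rres_mod a G f c -> inI a alpha (c%:~R : K).
Proof.
move=> [u [v huv]].
have [W lift_eq] : exists W, u * G + v * f - c%:P = (a%:Z)%:P * W.
  by apply/coef_dvdz_polyC => i; rewrite coefB -eqz_mod_dvd.
have [T ET] := cleared_red G_red.
have den_c_eq : (den g)%:P * c%:P = u * cleared g
           + (a%:Z)%:P * (u * T - (den g)%:P * W) + ((den g)%:P * v) * f.
  by rewrite ET -[c%:P](subrK (u * G + v * f)) -opprB lift_eq; ring.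
have := congr1 (ev gamma) den_c_eq.
rewrite !(evB, evD, evM, evC) ev_f ev_cleared g_alpha mulr0 addr0 intr_nat => den_c_val.
have [[e t] /= bezout] := coprimezP _ _ (coprime_den den_coprime).
exists (e%:~R * ev gamma (u * T - (den g)%:P * W) + (t * c)%:~R).
exists (e%:~R * ((den g)%:~R * ev gamma u)).
split.
- apply: integralD; last exact: integral_int.
  by apply: integralM; [exact: integral_int | exact: ev_integral].
- apply: integralM; first exact: integral_int.
  by apply: integralM; [exact: integral_int | exact: ev_integral].
have -> : (c%:~R : K) = e%:~R * ((den g)%:~R * c%:~R) + (t * a%:Z * c)%:~R.
  rewrite -!rmorphM -rmorphD /=; congr (_%:~R).
  by rewrite mulrA -mulrDl bezout mul1r.
rewrite den_c_val !(evB, evM, evC) !rmorphM /= intr_nat; ring.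
Qed.

Hypothesis index_coprime : exists d, is_index gamma d /\ coprime a d.

Lemma I_sub_Rres (c : int) : inI a alpha (c%:~R : K) -> in_Rres_mod a G f c.
Proof.
move=> [y [z [iy iz Hc]]].
have [d [hd cad]] := index_coprime.
have [Y eY] := index_mul_integral hd iy.
have [Z eZ] := index_mul_integral hd iz.
pose P := (den g * d%:Z * c)%:P - (a%:Z)%:P * (den g)%:P * Y - cleared g * Z.
have eP : ev gamma P = 0.
  rewrite /P !(evB, evM, evC) ev_cleared g_alpha -eY -eZ !rmorphM /= Hc !intr_nat.
  ring.
have [Q eQ] := minPoly_int_dvd f_monic f_minPoly eP.
have [T ET] := cleared_red G_red.
have cop : coprimez (den g * d%:Z) a%:Z.
  by rewrite coprimezMl (coprime_den den_coprime) coprimezE /= coprime_sym.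
have [[e t] /= bezout] := coprimezP _ _ cop.
exists (e%:P * (den g)%:P * Z), (e%:P * Q).
have c_decomp : c%:P = e%:P * (Q * f + (a%:Z)%:P * (den g)%:P * Y + cleared g * Z)
                 + t%:P * (a%:Z)%:P * c%:P.
  have -> : Q * f + (a%:Z)%:P * (den g)%:P * Y + cleared g * Z
            = (den g * d%:Z * c)%:P by rewrite -eQ /P; ring.
  rewrite -!polyCM -polyCD; congr (_%:P).
  by rewrite -[LHS]mul1r -bezout; ring.
have Rres_relation : (e%:P * (den g)%:P * Z) * G + (e%:P * Q) * f - c%:P =
   (a%:Z)%:P * (e%:P * T * Z - e%:P * (den g)%:P * Y - t%:P * c%:P).
  by rewrite {1}c_decomp ET; ring.
have a_dvd := (coef_dvdz_polyC _ _).2 (ex_intro _ _ Rres_relation).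
by move=> i; rewrite eqz_mod_dvd -coefB a_dvd.
Qed.

End IntersectionWithZ.
Arguments Rres_sub_I {K gamma f a alpha g G}.
Arguments I_sub_Rres {K gamma f a alpha g G}.

Lemma dvdz_iff_mod_multiple {a m : nat} (c : int) : (m %| a)%N ->
  (m%:Z %| c)%Z <-> exists k : int, (c == k * m%:Z %[mod a%:Z])%Z.
Proof.
move=> m_a; split=> [m_c | [k]]; first by exists (c %/ m%:Z)%Z; rewrite divzK.
rewrite eqz_mod_dvd => a_ck.
have m_ck : (m%:Z %| c - k * m%:Z)%Z by apply: dvdz_trans a_ck; rewrite dvdzE.
by rewrite -(subrK (k * m%:Z) c) rpredD // dvdz_mull // dvdzz.
Qed.

Lemma Rres_generator_dvd {a G f} {m1 m2 : nat} : (m2 %| a)%N ->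
  Rres_is_ideal a G f m1 -> Rres_is_ideal a G f m2 -> (m2 %| m1)%N.
Proof.
move=> m2_a R1 R2; rewrite -[(m2 %| m1)%N]/(m2%:Z %| m1%:Z)%Z; apply/(dvdz_iff_mod_multiple _ m2_a)/R2/R1.
by exists 1; rewrite mul1r.
Qed.

Theorem lemma8p3 (K : fieldExtType rat) (gamma : K) (f : {poly int})
  (a : nat) (alpha : K) (g : {poly rat}) :
  integral gamma ->
  <<1%VS; gamma>>%VS = fullv ->
  f \is monic ->
  map_poly intr f = minPoly 1%VS gamma ->
  (0 < a)%N ->
  integral alpha ->
  (exists d, is_index gamma d /\ coprime a d) ->
  (map_poly (in_alg K) g).[gamma] = alpha ->
  (forall i, coprimez (denq g`_i) a%:Z) ->
  forall G : {poly int}, red_poly a g G ->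
  [/\ exists m, is_min a alpha m,
      forall m, is_min a alpha m -> (m %| a)%N /\ Rres_is_ideal a G f m
    & forall m1 m2, (0 < m1)%N -> (m1 %| a)%N -> Rres_is_ideal a G f m1 ->
        (0 < m2)%N -> (m2 %| a)%N -> Rres_is_ideal a G f m2 -> m1 = m2].
Proof.
move=> gamma_int _ f_monic f_min a_gt0 _ index_cop g_alpha den_cop G G_red.
have I_iff_Rres (c : int) : inI a alpha (c%:~R : K) <-> in_Rres_mod a G f c.
  split; first exact: (I_sub_Rres f_monic f_min g_alpha den_cop G_red index_cop).
  exact: (Rres_sub_I gamma_int f_min g_alpha den_cop G_red).
split; first exact: min_exists.
- move=> m [_ min_m].
  have m_a : (m %| a)%N by rewrite -[(m %| a)%N]/(m%:Z %| a%:Z)%Z; apply/min_m/inI_a.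
  split=> // c; apply: iff_trans (iff_sym (I_iff_Rres c)) _.
  exact: iff_trans (min_m c) (dvdz_iff_mod_multiple c m_a).
- move=> m1 m2 _ m1_a R1 _ m2_a R2; apply/eqP; rewrite eqn_dvd.
  by rewrite (Rres_generator_dvd m1_a R2 R1) (Rres_generator_dvd m2_a R1 R2).
Qed.
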